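(* Let $n,m\ge1$, $c_1,\dots,c_n>0$, $T>0$, $\epsilon>0$, $r_1,\dots,r_m>0$ constant, and $\kappa_{ij}\ge0$. Define: - $\mu_j(q_j)=0$ if $q_j\le c_j$ and $\mu_j(q_j)=T(1-c_j/q_j)$ if $q_j>c_j$ (i.e. $\mu_j(q_j)=T[1-c_j/q_j]^+$); - for $\mu\in\mathbb{R}^n$, $\delta_{ij}(\mu)=\dfrac{e^{-(\kappa_{ij}+\mu_j)/\epsilon}}{\sum_{k=1}^n e^{-(\kappa_{ik}+\mu_k)/\epsilon}}$; - $\beta_j(q_j)=0$ if $q_j\le c_j$, $\beta_j(q_j)=q_j-c_j-c_j\log(q_j/c_j)$ if $q_j>c_j$. Consider the dynamical system in $q\in\mathbb{R}^n$: $$\dot q_j=\sum_{i=1}^m x_{ij}-\frac{q_j}{T},\qquad \mu_j=\mu_j(q_j),\qquad x_{ij}=r_i\,\delta_{ij}(\mu),$$ and call $(X^*,q^*,\mu^* )$ an equilibrium point if $\mu^*_j=\mu_j(q^*_j)$, $x^*_{ij}=r_i\delta_{ij}(\mu^* )$ and $\sum_i x^*_{ij}=q^*_j/T$ for all $i,j$. Define the Lagrangian $$L(X,q,\mu)=\sum_{i,j}\kappa_{ij}x_{ij}+\sum_j\beta_j(q_j)+\epsilon\sum_{i,j}x_{ij}\log\Big(\frac{x_{ij}}{r_i}\Big)+\sum_j\mu_j\Big[\sum_i x_{ij}-\frac{q_j}{T}\Big]$$ for $X$ in the set $S=\{X: x_{ij}\ge0,\ \sum_j x_{ij}=r_i\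 \forall i\}$, $q\in\mathbb{R}^n$, $\mu\in\mathbb{R}^n$, and call $(X^*,q^*,\mu^* )$ a saddle point of $L$ if $(X^*,q^* )$ minimizes $L(\cdot,\cdot,\mu^* )$ over $S\times\mathbb{R}^n$ and $\mu^*$ maximizes $L(X^*,q^*,\cdot)$ over $\mathbb{R}^n$. Then the following are equivalent: (i) $(X^*,q^*,\mu^* )$ is a saddle point of $L$; (ii) $(X^*,q^*,\mu^* )$ is an equilibrium point of the dynamics. In particular, the dynamics have a unique equilibrium point.
   Context: Convention $0\log0=0$. The dynamics model queues $q_j$ at $n$ EV charging stations with capacities $c_j$, fed by requests from $m$ locations at rates $r_i$ with travel times $\kappa_{ij}$, mean sojourn time $T$, waiting delays $\mu_j$, and soft-min (logit) station selection with parameter $\epsilon$. *)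

From mathcomp Require Import all_boot all_order all_algebra.
From mathcomp Require Import all_classical all_reals all_analysis.
Set Implicit Arguments. Unset Strict Implicit. Unset Printing Implicit Defensive.
Import Order.TTheory GRing.Theory Num.Theory.
Local Open Scope ring_scope.

Section Model.
Variables (R : realType) (n m : nat).
Variables (c : 'I_n -> R) (T eps : R) (r : 'I_m -> R) (kappa : 'I_m -> 'I_n -> R).

Definition mu_fun (j : 'I_n) (qj : R) : R :=
  if qj <= c j then 0 else T * (1 - c j / qj).

Definition delta (mu : 'I_n -> R) (i : 'I_m) (j : 'I_n) : R :=
  expR (- (kappa i j + mu j) / eps) /
  \sum_(k < n) expR (- (kappa i k + mu k) / eps).

Definition beta (j : 'I_n) (qj : R) : R :=
  if qj <= c j then 0 else qj - c j - c j * ln (qj / c j).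

(* x log(x / r) with the convention 0 log 0 = 0 *)
Definition xlogx (x ri : R) : R := if x == 0 then 0 else x * ln (x / ri).

Definition Lagr (X : 'I_m -> 'I_n -> R) (q mu : 'I_n -> R) : R :=
  \sum_(i < m) \sum_(j < n) kappa i j * X i j
  + \sum_(j < n) beta j (q j)
  + eps * \sum_(i < m) \sum_(j < n) xlogx (X i j) (r i)
  + \sum_(j < n) mu j * (\sum_(i < m) X i j - q j / T).

Definition inS (X : 'I_m -> 'I_n -> R) : Prop :=
  (forall i j, 0 <= X i j) /\ (forall i, \sum_(j < n) X i j = r i).

Definition saddle_point (X : 'I_m -> 'I_n -> R) (q mu : 'I_n -> R) : Prop :=
  inS X /\
  (forall X' q', inS X' -> Lagr X q mu <= Lagr X' q' mu) /\
  (forall mu', Lagr X q mu' <= Lagr X q mu).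

Definition equilibrium (X : 'I_m -> 'I_n -> R) (q mu : 'I_n -> R) : Prop :=
  (forall j, mu j = mu_fun j (q j)) /\
  (forall i j, X i j = r i * delta mu i j) /\
  (forall j, \sum_(i < m) X i j = q j / T).

End Model.

From Pilot Require Import Defs.
From mathcomp Require Import all_boot all_order all_algebra.
From mathcomp Require Import all_classical all_reals all_analysis.
From mathcomp Require Import ring lra.
Import Order.TTheory GRing.Theory Num.Theory numFieldNormedType.Exports.

Set Implicit Arguments.
Unset Strict Implicit.
Unset Printing Implicit Defensive.
Local Open Scope ring_scope.

(* For X in S the Lagrangian splits as
     L(X,q,mu) = eps * sum_ij KL(x_ij | r_i delta_ij(mu)) - eps * sum_i r_i ln Z_i(mu)
                 + sum_j (beta_j(q_j) - mu_j q_j / T),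
   where Z_i is the denominator of the logit choice and KL(x | y) = x ln(x/y) - x + y >= 0
   vanishes only at x = y.  Hence for fixed mu, L is minimised exactly at the logit flow
   x_ij = r_i delta_ij(mu) and at the q with mu_j = mu_j(q_j), since mu_j(.)/T is the
   derivative of the convex function beta_j; and as L is affine in mu, mu maximises it iff
   sum_i x_ij = q_j / T.
   Saddle points can be exchanged: if (X1,q1,mu1) and (X2,q2,mu2) are saddle points, so is
   (X1,q1,mu2), which forces mu1 = mu2, hence X1 = X2 and q1 = q2.
   For existence, freeze all delays but the one of station j: the delay t in [0,T) that
   balances the queue of j, (T - t) * demand_j = c_j, exists by the intermediate value
   theorem and increases with the other delays, since raising them diverts demand to j.
   This monotone map on [0,T]^n has a fixed point (Knaster-Tarski: take the coordinatewise
   supremum of its post-fixed points), and a fixed point is an equilibrium. *)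

Lemma continuous_sum (R : realType) (I : Type) (s : seq I) (F : I -> R -> R) (t : R) :
  (forall i, {for t, continuous (F i)}) ->
  {for t, continuous (fun x => \sum_(i <- s) F i x)}.
Proof.
by move=> F_cont; apply: (cvg_big (P := xpredT) add_continuous) => // i _; exact: F_cont.
Qed.

Lemma continuous_root (R : realType) (f : R -> R) a b : a <= b ->
  (forall t, {for t, continuous f}) -> f b < 0 < f a -> exists2 t, a < t <= b & f t = 0.
Proof.
move=> ab f_cont /andP[fb_lt0 fa_gt0].
have f0 : Num.min (f a) (f b) <= 0 <= Num.max (f a) (f b).
  by rewrite ge_min le_max (ltW fb_lt0) (ltW fa_gt0) orbT.
have [t] := IVT ab (continuous_subspaceT f_cont) f0.
rewrite in_itv /= => /andP[a_le_t t_le_b] ft0.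
exists t => //; rewrite t_le_b andbT lt_neqAle a_le_t andbT.
by apply: contraTneq fa_gt0 => ->; rewrite ft0 ltxx.
Qed.

Lemma balance_root (R : realType) (d : R -> R) (a T D : R) :
    0 < a -> 0 < T -> (forall t, {for t, continuous d}) -> (forall t, d t <= D) ->
    a / T < d 0 ->
  exists2 t, 0 < t < T & d t = a / (T - t).
Proof.
move=> a_gt0 T_gt0 d_cont d_le d0_gt.
have aT_lt : a < d 0 * T by rewrite -ltr_pdivrMr.
have DT : d 0 * T <= D * T by rewrite ler_pM2r.
have D1_gt0 : 0 < D + 1 by have := divr_gt0 a_gt0 T_gt0; have := d_le 0; lra.
have e_gt0 : 0 < a / (D + 1) by rewrite divr_gt0.
have e_ltT : a / (D + 1) < T by rewrite ltr_pdivrMr //; nra.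
have eD1 : a / (D + 1) * (D + 1) = a by rewrite divfK ?gt_eqF.
have f_cont t : {for t, continuous (fun t => (T - t) * d t - a)}.
  apply: continuousD; last exact: cvg_cst.
  apply: continuousM; last exact: d_cont.
  by apply: continuousD; [exact: cvg_cst | apply: continuousN; exact: cvg_id].
have f_sign : (T - (T - a / (D + 1))) * d (T - a / (D + 1)) - a < 0 < (T - 0) * d 0 - a.
  rewrite subKr subr0.
  by have := ler_wpM2l (ltW e_gt0) (d_le (T - a / (D + 1))); nra.
have Te_ge0 : 0 <= T - a / (D + 1) by rewrite subr_ge0 ltW.
have [t /andP[t_gt0 t_le] ft0] := continuous_root Te_ge0 f_cont f_sign.
exists t; first by apply/andP; split => //; lra.
have Tt_gt0 : 0 < T - t by lra.
move/eqP: ft0; rewrite subr_eq0 => /eqP <-.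
by rewrite mulrC mulKf ?gt_eqF.
Qed.

Lemma monotone_fixpoint (R : realType) (I : Type) (F : (I -> R) -> I -> R) (lo hi : R) :
    (forall mu nu, (forall k, mu k <= nu k) -> forall j, F mu j <= F nu j) ->
    (forall mu j, lo <= F mu j <= hi) ->
  exists s, forall j, F s j = s j.
Proof.
move=> F_mono F_bnd.
pose P := [set mu : I -> R | forall j, mu j <= F mu j]%classic.
pose S j := [set mu j | mu in P]%classic.
pose s j := sup (S j).
have S_ne j : (S j !=set0)%classic.
  by exists lo, (fun=> lo) => // k; case/andP: (F_bnd (fun=> lo) k).
have S_ub j : ubound (S j) hi.
  by move=> _ [mu Pmu <-]; apply: le_trans (Pmu j) _; case/andP: (F_bnd mu j).
have le_s mu : P mu -> forall k, mu k <= s k.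
  move=> Pmu k; apply: sup_upper_bound; last by exists mu.
  by split; [exact: S_ne | exists hi; exact: S_ub].
have s_le j : s j <= F s j.
  apply: ge_sup (S_ne j) _ => _ [mu Pmu <-].
  exact: le_trans (Pmu j) (F_mono _ _ (le_s mu Pmu) j).
have P_Fs : P (F s) by move=> j; exact: F_mono s_le j.
by exists s => j; apply/eqP; rewrite eq_le s_le andbT; exact: le_s P_Fs j.
Qed.

Section KullbackLeibler.
Context {R : realType}.
Implicit Types x y : R.

Lemma ln_le_subr1 {x} : 0 < x -> ln x <= x - 1.
Proof. by move=> x_gt0; have := expR_ge1Dx (ln x); rewrite lnK ?posrE //; lra. Qed.

Lemma ln_lt_subr1 {x} : 0 < x -> x != 1 -> ln x < x - 1.
Proof.
move=> x_gt0 x_neq1; have /expR_gt1Dx : ln x != 0 by rewrite ln_eq0.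
by rewrite lnK ?posrE //; lra.
Qed.

Definition kl x y := xlogx x y - x + y.

Lemma klE x y : 0 < x -> 0 < y -> kl x y = x * (y / x - 1 - ln (y / x)).
Proof.
move=> x_gt0 y_gt0; rewrite /kl /xlogx gt_eqF // -[x / y]invf_div lnV ?posrE ?divr_gt0 //.
by field; rewrite gt_eqF.
Qed.

Lemma kl0x y : kl 0 y = y.
Proof. by rewrite /kl /xlogx eqxx subr0 add0r. Qed.

Lemma kl_ge0 {x y} : 0 <= x -> 0 < y -> 0 <= kl x y.
Proof.
rewrite le_eqVlt => /predU1P[<- /ltW|x_gt0 y_gt0]; first by rewrite kl0x.
rewrite klE //; apply: mulr_ge0; first exact: ltW.
by rewrite subr_ge0 ln_le_subr1 // divr_gt0.
Qed.

Lemma kl_eq0 {x y} : 0 <= x -> 0 < y -> kl x y = 0 -> x = y.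
Proof.
rewrite le_eqVlt => /predU1P[<- y_gt0|x_gt0 y_gt0]; first by rewrite kl0x => y0; lra.
rewrite klE // => /eqP; rewrite mulf_eq0 gt_eqF //= subr_eq0 => /eqP ln_eq.
suff /divr1_eq -> : y / x = 1 by [].
apply/eqP/negP => /negP yx_neq1.
by have := ln_lt_subr1 (divr_gt0 y_gt0 x_gt0) yx_neq1; rewrite -ln_eq ltxx.
Qed.

Lemma klxx {y} : 0 < y -> kl y y = 0.
Proof. by move=> y_gt0; rewrite klE // divff ?gt_eqF // ln1 subrr subr0 mulr0. Qed.

End KullbackLeibler.

Section QueueCost.
Variables (R : realType) (n : nat) (c : 'I_n -> R) (T : R) (j : 'I_n).
Hypotheses (c_gt0 : 0 < c j) (T_gt0 : 0 < T).

Local Notation mu_fun := (mu_fun c T j).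
Local Notation beta := (beta c j).

Lemma mu_fun_ge0 t : 0 <= mu_fun t.
Proof.
rewrite /mu_fun; case: (leP t (c j)) => // ct; have t_gt0 := lt_trans c_gt0 ct.
by rewrite pmulr_rge0 // subr_ge0 ler_pdivrMr // mul1r ltW.
Qed.

Lemma mu_fun_ltT t : mu_fun t < T.
Proof.
rewrite /mu_fun; case: (leP t (c j)) => // ct; have t_gt0 := lt_trans c_gt0 ct.
by rewrite gtr_pMr // ltrBlDr ltrDl divr_gt0.
Qed.

Lemma mu_fun_gtE b t : 0 <= b < T -> (b < mu_fun t) = (c j * T / (T - b) < t).
Proof.
move=> /andP[b_ge0 b_ltT]; have Tb_gt0 : 0 < T - b by lra.
rewrite /mu_fun ltr_pdivrMr //; case: (leP t (c j)) => [tc|ct].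
  rewrite ltNge b_ge0; apply/esym/negbTE; rewrite -leNgt.
  have := mulr_ge0 (ltW c_gt0) b_ge0; have := ler_wpM2r (ltW Tb_gt0) tc; lra.
have t_gt0 := lt_trans c_gt0 ct.
have ct_t : c j / t * t = c j by rewrite divfK ?gt_eqF.
rewrite -[in RHS]ct_t; apply/idP/idP => h.
- by rewrite -(ltr_pM2r t_gt0) in h; lra.
- by rewrite -(ltr_pM2r t_gt0); lra.
Qed.

Lemma mu_fun_ltE b t : 0 < b < T -> (mu_fun t < b) = (t < c j * T / (T - b)).
Proof.
move=> /andP[b_gt0 b_ltT]; have Tb_gt0 : 0 < T - b by lra.
rewrite /mu_fun ltr_pdivlMr //; case: (leP t (c j)) => [tc|ct].
  rewrite b_gt0; apply/esym.
  have := mulr_gt0 c_gt0 b_gt0; have := ler_wpM2r (ltW Tb_gt0) tc; lra.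
have t_gt0 := lt_trans c_gt0 ct.
have ct_t : c j / t * t = c j by rewrite divfK ?gt_eqF.
rewrite -[in RHS]ct_t; apply/idP/idP => h.
- by rewrite -(ltr_pM2r t_gt0) in h; lra.
- by rewrite -(ltr_pM2r t_gt0); lra.
Qed.

Lemma mu_fun_squeeze b t :
    (forall s, t < s -> b <= mu_fun s) -> (forall s, s < t -> mu_fun s <= b) ->
  b = mu_fun t.
Proof.
move=> le_right ge_left.
have b_ge0 : 0 <= b.
  by have := ge_left (t - 1) ltac:(lra); have := mu_fun_ge0 (t - 1); lra.
have b_ltT : b < T.
  by have := le_right (t + 1) ltac:(lra); have := mu_fun_ltT (t + 1); lra.
have [k k_def] : {k | k = c j * T / (T - b)} by eexists.
case: (ltgtP b (mu_fun t)) => // [b_lt|lt_b].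
- have kt : k < t by rewrite k_def -mu_fun_gtE ?b_ge0.
  have : b < mu_fun ((k + t) / 2) by rewrite mu_fun_gtE ?b_ge0 // -k_def; lra.
  by have := ge_left ((k + t) / 2) ltac:(lra); lra.
- have b_gt0 : 0 < b by have := mu_fun_ge0 t; lra.
  have tk : t < k by rewrite k_def -mu_fun_ltE ?b_gt0.
  have : mu_fun ((t + k) / 2) < b by rewrite mu_fun_ltE ?b_gt0 // -k_def; lra.
  by have := le_right ((t + k) / 2) ltac:(lra); lra.
Qed.

Lemma beta_tangent {s t} : 0 < s -> 0 < t ->
  t - c j - c j * ln (t / c j) + (1 - c j / t) * (s - t) <= s - c j - c j * ln (s / c j).
Proof.
move=> s_gt0 t_gt0.
have -> : ln (s / c j) = ln (s / t) + ln (t / c j).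
  by rewrite -lnM ?posrE ?divr_gt0 // mulrA divfK ?gt_eqF.
have := ler_wpM2l (ltW c_gt0) (ln_le_subr1 (divr_gt0 s_gt0 t_gt0)).
have : c j / t * t = c j by rewrite divfK ?gt_eqF.
lra.
Qed.

Lemma beta_ge0 s : 0 <= beta s.
Proof.
rewrite /beta; case: (leP s (c j)) => // cs.
by have := beta_tangent (lt_trans c_gt0 cs) c_gt0; rewrite !divff ?gt_eqF // ln1; lra.
Qed.

Lemma beta_ge_tangent s {t} : c j < t ->
  t - c j - c j * ln (t / c j) + (1 - c j / t) * (s - t) <= beta s.
Proof.
move=> ct; have t_gt0 := lt_trans c_gt0 ct.
rewrite /beta; case: (leP s (c j)) => [sc|cs]; last exact: beta_tangent (lt_trans c_gt0 cs) t_gt0.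
have slope_ge0 : 0 <= 1 - c j / t by rewrite subr_ge0 ler_pdivrMr // mul1r ltW.
have := ler_wpM2l slope_ge0 (_ : s - t <= c j - t); rewrite lerD2r => /(_ sc).
by have := beta_tangent c_gt0 t_gt0; rewrite divff ?gt_eqF // ln1; lra.
Qed.

(* [mu_fun t / T] is the derivative of the convex function [beta] at [t]. *)
Lemma beta_subgradient s t :
  beta t - mu_fun t * (t / T) <= beta s - mu_fun t * (s / T).
Proof.
rewrite /mu_fun; case: (leP t (c j)) => [tc|ct].
  by rewrite /beta tc !mul0r !subr0 beta_ge0.
have slopeE y : T * (1 - c j / t) * (y / T) = (1 - c j / t) * y.
  by field; rewrite !gt_eqF // (lt_trans c_gt0 ct).
rewrite !slopeE {1}/Defs.beta (lt_geF ct).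
by have := beta_ge_tangent s ct; lra.
Qed.

Lemma beta_argminP b t :
  (forall s, beta t - b * (t / T) <= beta s - b * (s / T)) <-> b = mu_fun t.
Proof.
split=> [t_min|-> s]; last exact: beta_subgradient.
apply: mu_fun_squeeze => s st; have := t_min s; have := beta_subgradient t s.
- have : 0 < (s - t) / T by rewrite divr_gt0 ?subr_gt0.
  move=> /pmulr_lle0 le0 h1 h2; have := le0 (b - mu_fun s); lra.
- have : 0 < (t - s) / T by rewrite divr_gt0 ?subr_gt0.
  move=> /pmulr_lle0 le0 h1 h2; have := le0 (mu_fun s - b); lra.
Qed.

Lemma mu_fun_balance d t : 0 <= t < T ->
  d <= c j / (T - t) -> (0 < t -> d = c j / (T - t)) -> mu_fun (T * d) = t.
Proof.
move=> /andP[t_ge0 t_ltT] d_le d_eq; have Tt_gt0 : 0 < T - t by lra.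
rewrite /mu_fun; case: (eqVneq t 0) => [t0|t_neq0].
  have := ler_wpM2l (ltW T_gt0) d_le.
  by rewrite t0 subr0 [T * (_ / _)]mulrC divfK ?gt_eqF // => ->.
have t_gt0 : 0 < t by rewrite lt_neqAle eq_sym t_neq0.
have ct : c j < T * (c j / (T - t)).
  by rewrite mulrA ltr_pdivlMr //; have := mulr_gt0 c_gt0 t_gt0; lra.
by rewrite d_eq // (lt_geF ct); field; rewrite !gt_eqF.
Qed.

End QueueCost.

Section Network.
Variables (R : realType) (n m : nat) (c : 'I_n -> R) (T eps : R).
Variables (r : 'I_m -> R) (kappa : 'I_m -> 'I_n -> R).
Hypotheses (n_gt0 : (0 < n)%N) (c_gt0 : forall j, 0 < c j) (T_gt0 : 0 < T).
Hypotheses (eps_gt0 : 0 < eps) (r_gt0 : forall i, 0 < r i).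

Local Notation delta := (delta eps kappa).
Local Notation Lagr := (Lagr c T eps r kappa).
Local Notation inS := (inS r).
Local Notation saddle_point := (saddle_point c T eps r kappa).
Local Notation equilibrium := (equilibrium c T eps r kappa).

Definition logit_den (mu : 'I_n -> R) i := \sum_(k < n) expR (- (kappa i k + mu k) / eps).

Definition flow (mu : 'I_n -> R) i j := r i * delta mu i j.

Definition queue_cost (mu q : 'I_n -> R) :=
  \sum_(j < n) (beta c j (q j) - mu j * (q j / T)).

Lemma sum_expR_gt0 (F : 'I_n -> R) : 0 < \sum_(k < n) expR (F k).
Proof.
rewrite (bigD1 (Ordinal n_gt0)) //= ltr_pwDl ?expR_gt0 //.
by apply: sumr_ge0 => k _; exact/ltW/expR_gt0.
Qed.

Lemma delta_gt0 mu i j : 0 < delta mu i j.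
Proof. by rewrite divr_gt0 ?expR_gt0 ?sum_expR_gt0. Qed.

Lemma sum_delta mu i : \sum_(j < n) delta mu i j = 1.
Proof. by rewrite /delta -mulr_suml divff // gt_eqF // sum_expR_gt0. Qed.

Lemma ln_delta mu i j :
  ln (delta mu i j) = - (kappa i j + mu j) / eps - ln (logit_den mu i).
Proof. by rewrite ln_div ?posrE ?expR_gt0 ?sum_expR_gt0 // expRK. Qed.

Lemma flow_gt0 mu i j : 0 < flow mu i j.
Proof. by rewrite mulr_gt0 ?delta_gt0. Qed.

Lemma inS_flow mu : inS (flow mu).
Proof.
split=> [i j|i]; first exact/ltW/flow_gt0.
by rewrite -mulr_sumr sum_delta mulr1.
Qed.

Lemma LagrE X q mu : Lagr X q mu =
  \sum_(i < m) \sum_(j < n) (kappa i j * X i j + eps * xlogx (X i j) (r i) + mu j * X i j)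
  + queue_cost mu q.
Proof.
rewrite /Lagr /queue_cost.
have -> : \sum_(i < m) \sum_(j < n)
    (kappa i j * X i j + eps * xlogx (X i j) (r i) + mu j * X i j) =
  \sum_(i < m) \sum_(j < n) kappa i j * X i j
  + eps * \sum_(i < m) \sum_(j < n) xlogx (X i j) (r i)
  + \sum_(i < m) \sum_(j < n) mu j * X i j.
  rewrite mulr_sumr -!big_split; apply: eq_bigr => i _.
  by rewrite mulr_sumr -!big_split.
have -> : \sum_(j < n) mu j * (\sum_(i < m) X i j - q j / T) =
  \sum_(i < m) \sum_(j < n) mu j * X i j - \sum_(j < n) mu j * (q j / T).
  rewrite exchange_big -sumrB; apply: eq_bigr => j _.
  by rewrite mulrBr mulr_sumr.
rewrite sumrB; lra.
Qed.

Lemma Lagr_entry mu i j x : 0 <= x ->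
  kappa i j * x + eps * xlogx x (r i) + mu j * x =
  eps * kl x (flow mu i j) + eps * (x - flow mu i j) - eps * x * ln (logit_den mu i).
Proof.
rewrite le_eqVlt => /predU1P[<-|x_gt0]; first by rewrite kl0x /xlogx eqxx; ring.
have flow_r : flow mu i j / r i = delta mu i j.
  by rewrite /flow mulrAC divff ?gt_eqF ?mul1r.
have -> : xlogx x (r i) = x * ln (x / flow mu i j) + x * ln (delta mu i j).
  rewrite /xlogx gt_eqF // -mulrDr -lnM ?posrE ?delta_gt0 ?divr_gt0 ?flow_gt0 //.
  by rewrite -flow_r mulrA divfK ?gt_eqF ?flow_gt0.
rewrite ln_delta /kl /xlogx gt_eqF //.
by field; rewrite gt_eqF.
Qed.

Lemma Lagr_kl X q mu : inS X -> Lagr X q mu =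
  eps * \sum_(i < m) \sum_(j < n) kl (X i j) (flow mu i j)
  - eps * \sum_(i < m) r i * ln (logit_den mu i) + queue_cost mu q.
Proof.
move=> [X_ge0 X_sum]; rewrite LagrE; congr (_ + _).
rewrite !mulr_sumr -sumrB; apply: eq_bigr => i _.
rewrite (eq_bigr _ (fun j _ => Lagr_entry mu i j (X_ge0 i j))) sumrB big_split /=.
rewrite -!mulr_sumr -mulr_suml -mulr_sumr sumrB X_sum (inS_flow mu).2.
by rewrite subrr mulr0 addr0 mulrA.
Qed.

Lemma Lagr_sub_flow X q mu : inS X ->
  Lagr X q mu - Lagr (flow mu) q mu =
  eps * \sum_(i < m) \sum_(j < n) kl (X i j) (flow mu i j).
Proof.
have kl_flow : \sum_(i < m) \sum_(j < n) kl (flow mu i j) (flow mu i j) = 0.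
  by apply: big1 => i _; apply: big1 => j _; exact: klxx (flow_gt0 mu i j).
move=> X_S; rewrite Lagr_kl // Lagr_kl ?kl_flow; last exact: inS_flow.
by rewrite mulr0; ring.
Qed.

Lemma Lagr_flow_le X q mu : inS X -> Lagr (flow mu) q mu <= Lagr X q mu.
Proof.
move=> X_S; rewrite -subr_ge0 Lagr_sub_flow // pmulr_rge0 //.
by apply: sumr_ge0 => i _; apply: sumr_ge0 => j _; exact: kl_ge0 (X_S.1 i j) (flow_gt0 mu i j).
Qed.

Lemma Lagr_argmin_flow X q mu : inS X -> Lagr X q mu <= Lagr (flow mu) q mu -> X = flow mu.
Proof.
move=> X_S; rewrite -subr_le0 Lagr_sub_flow // pmulr_rle0 // => sum_le0.
have kl_ge0_ij i j : 0 <= kl (X i j) (flow mu i j).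
  exact: kl_ge0 (X_S.1 i j) (flow_gt0 mu i j).
have row_ge0 i : 0 <= \sum_(j < n) kl (X i j) (flow mu i j) by exact: sumr_ge0.
have sum0 : \sum_(i < m) \sum_(j < n) kl (X i j) (flow mu i j) = 0.
  by apply/eqP; rewrite eq_le sum_le0 sumr_ge0.
have row0 i := psumr_eq0P (fun i _ => row_ge0 i) sum0 i.
apply/funext => i; apply/funext => j; apply: kl_eq0 (X_S.1 i j) (flow_gt0 mu i j) _.
exact: psumr_eq0P (fun j _ => kl_ge0_ij i j) (row0 i isT) j isT.
Qed.

Lemma Lagr_shift_mu X q mu mu' : Lagr X q mu' =
  Lagr X q mu + \sum_(j < n) (mu' j - mu j) * (\sum_(i < m) X i j - q j / T).
Proof.
rewrite /Lagr -[in RHS]addrA -big_split /=; congr (_ + _).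
by apply: eq_bigr => j _; ring.
Qed.

Lemma Lagr_dfwith X q mu j t : Lagr X (dfwith q j t) mu - Lagr X q mu =
  (beta c j t - mu j * (t / T)) - (beta c j (q j) - mu j * (q j / T)).
Proof.
rewrite !LagrE /queue_cost (bigD1 j) //= [in X in _ - X](bigD1 j) //= dfwithin.
rewrite (eq_bigr (fun k => beta c k (q k) - mu k * (q k / T))) => [|k /negbTE k_neq_j].
  by ring.
by rewrite dfwithout // eq_sym k_neq_j.
Qed.

Lemma Lagr_queue_min X q q' mu : (forall j, mu j = mu_fun c T j (q j)) ->
  Lagr X q mu <= Lagr X q' mu.
Proof.
move=> mu_q; rewrite !LagrE lerD2l; apply: ler_sum => j _.
by rewrite mu_q; exact: beta_subgradient.
Qed.

Lemma saddle_point_equilibrium X q mu : saddle_point X q mu -> equilibrium X q mu.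
Proof.
move=> [X_S [min_Xq max_mu]]; split; [|split].
- move=> j; apply/(beta_argminP (c_gt0 j) T_gt0) => s.
  by have := min_Xq X (dfwith q j s) X_S; rewrite -subr_ge0 Lagr_dfwith subr_ge0.
- by move=> i j; rewrite (Lagr_argmin_flow X_S (min_Xq _ q (inS_flow mu))).
pose v j := \sum_(i < m) X i j - q j / T.
have v0 : \sum_(j < n) v j ^+ 2 = 0.
  apply/eqP; rewrite eq_le sumr_ge0 ?andbT => [|j _]; last exact: sqr_ge0.
  have := max_mu (fun j => mu j + v j); rewrite (Lagr_shift_mu _ _ mu) gerDl.
  by under eq_bigr do rewrite addrAC subrr add0r -expr2.
move=> j; apply/eqP; rewrite -subr_eq0 -sqrf_eq0; apply/eqP.
exact: psumr_eq0P (fun j _ => sqr_ge0 (v j)) v0 j isT.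
Qed.

Lemma equilibrium_saddle_point X q mu : equilibrium X q mu -> saddle_point X q mu.
Proof.
move=> [mu_q [X_flow sum_X]].
have X_eq : X = flow mu by apply/funext => i; apply/funext => j; exact: X_flow.
subst X; split; [exact: inS_flow|split => [X' q' X'_S|mu']].
- exact: le_trans (Lagr_queue_min _ q' mu_q) (Lagr_flow_le _ _ X'_S).
- by rewrite (Lagr_shift_mu _ _ mu) big1 ?addr0 // => j _; rewrite sum_X subrr mulr0.
Qed.

Lemma saddle_point_exchange X1 q1 mu1 X2 q2 mu2 :
  saddle_point X1 q1 mu1 -> saddle_point X2 q2 mu2 -> saddle_point X1 q1 mu2.
Proof.
move=> [X1_S [min1 max1]] [X2_S [min2 max2]].
(* L X1 q1 mu2 <= L X1 q1 mu1 <= L X2 q2 mu1 <= L X2 q2 mu2 <= L X1 q1 mu2 *)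
have := max1 mu2; have := min1 X2 q2 X2_S; have := max2 mu1; have := min2 X1 q1 X1_S.
move=> ? ? ? ?; split; [done | split => [X' q' X'_S|mu']].
- by have := min2 X' q' X'_S; lra.
- by have := max1 mu'; lra.
Qed.

Lemma equilibrium_unique X1 q1 mu1 X2 q2 mu2 :
  equilibrium X1 q1 mu1 -> equilibrium X2 q2 mu2 -> (X1, q1, mu1) = (X2, q2, mu2).
Proof.
move=> eq1 eq2.
have [mu2_q1 _] : equilibrium X1 q1 mu2.
  apply: saddle_point_equilibrium.
  exact: saddle_point_exchange (equilibrium_saddle_point eq1) (equilibrium_saddle_point eq2).
have mu12 : mu1 = mu2 by apply/funext => j; rewrite mu2_q1 eq1.1.
have X12 : X1 = X2.
  by apply/funext => i; apply/funext => j; rewrite eq1.2.1 eq2.2.1 mu12.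
have q12 : q1 = q2.
  apply/funext => j; apply: (mulIf (invr_neq0 (lt0r_neq0 T_gt0))).
  by rewrite -eq1.2.2 -eq2.2.2 X12.
by rewrite X12 q12 mu12.
Qed.

Definition demand (mu : 'I_n -> R) j := \sum_(i < m) flow mu i j.

Lemma delta_inv mu i j : delta mu i j =
  (\sum_(k < n) expR ((kappa i j + mu j - (kappa i k + mu k)) / eps))^-1.
Proof.
rewrite /delta -invf_div mulr_suml; congr (_^-1); apply: eq_bigr => k _.
by rewrite -expRB; congr expR; field; rewrite gt_eqF.
Qed.

Lemma delta_le mu nu i j : (forall k, nu j - nu k <= mu j - mu k) ->
  delta mu i j <= delta nu i j.
Proof.
move=> le_gap; rewrite !delta_inv lef_pV2 ?posrE ?sum_expR_gt0 //.
apply: ler_sum => k _; rewrite ler_expR ler_pM2r ?invr_gt0 //.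
by have := le_gap k; lra.
Qed.

Lemma delta_le1 mu i j : delta mu i j <= 1.
Proof.
rewrite -(sum_delta mu i) (bigD1 j) //= lerDl.
by apply: sumr_ge0 => k _; exact/ltW/delta_gt0.
Qed.

Lemma demand_le_sum mu j : demand mu j <= \sum_(i < m) r i.
Proof.
apply: ler_sum => i _; rewrite /flow -[leRHS]mulr1.
by rewrite ler_wpM2l ?delta_le1 // ltW.
Qed.

Lemma demand_dfwith_le mu nu j a b : (forall k, mu k <= nu k) -> b <= a ->
  demand (dfwith mu j a) j <= demand (dfwith nu j b) j.
Proof.
move=> mu_le ba; apply: ler_sum => i _; rewrite /flow ler_wpM2l ?(ltW (r_gt0 i)) //.
apply: delta_le => k; rewrite !dfwithin.
by case: (eqVneq j k) => [<-|jk]; rewrite ?dfwithin ?dfwithout //; have := mu_le k; lra.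
Qed.

Lemma continuous_demand_dfwith mu j : continuous (fun t => demand (dfwith mu j t) j).
Proof.
have cont_exp i k : continuous (fun t => expR (- (kappa i k + dfwith mu j t k) / eps)).
  move=> t; apply: continuous_comp; last exact: continuous_expR.
  apply: continuousM; last exact: cvg_cst.
  apply: continuousN; apply: continuousD; first exact: cvg_cst.
  case: (eqVneq j k) => [<-|jk].
    by rewrite (_ : (dfwith mu j)^~ j = id) ?funeqE => [|x]; [exact: cvg_id|rewrite dfwithin].
  by rewrite (_ : (dfwith mu j)^~ k = cst (mu k)) ?funeqE => [|x]; [exact: cvg_cst|rewrite dfwithout].
rewrite /demand /flow /delta.
move=> t; apply: continuous_sum => i.
apply: continuousM; first exact: cvg_cst.
apply: continuousM; first exact: cont_exp.
apply: continuousV; first by rewrite gt_eqF ?sum_expR_gt0.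
by apply: continuous_sum => k; exact: cont_exp.
Qed.

(* [t] is the delay at station [j] that is consistent with its own queue when the other
   stations keep the delays [mu]: the queue [T * demand] it attracts has delay [t]
   (see [mu_fun_balance]). *)
Definition balancing_delay (mu : 'I_n -> R) j t := [/\ 0 <= t, t < T,
  demand (dfwith mu j t) j <= c j / (T - t) &
  0 < t -> demand (dfwith mu j t) j = c j / (T - t)].

Lemma balancing_delay_exists mu j : exists t, balancing_delay mu j t.
Proof.
have [d0_le|d0_gt] := leP (demand (dfwith mu j 0) j) (c j / T).
  by exists 0; split; rewrite ?subr0 ?ltxx.
have [t /andP[t_gt0 t_ltT] d_eq] := balance_root (c_gt0 j) T_gt0
  (@continuous_demand_dfwith mu j) (fun t => demand_le_sum (dfwith mu j t) j) d0_gt.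
by exists t; split; rewrite ?d_eq // ltW.
Qed.

Lemma balancing_delay_le mu nu j a b : (forall k, mu k <= nu k) ->
  balancing_delay mu j a -> balancing_delay nu j b -> a <= b.
Proof.
move=> mu_le [a_ge0 a_ltT _ a_eq] [b_ge0 b_ltT b_le _].
rewrite leNgt; apply/negP => b_lt_a.
have := demand_dfwith_le j mu_le (ltW b_lt_a); rewrite a_eq; last by lra.
have : c j / (T - b) < c j / (T - a) by rewrite ltr_pM2l // ltf_pV2 ?posrE; lra.
by lra.
Qed.

Lemma exists_equilibrium : exists X q mu, equilibrium X q mu.
Proof.
have [F F_bal] := choice (fun p : ('I_n -> R) * 'I_n => balancing_delay_exists p.1 p.2).
have F_mono mu nu : (forall k, mu k <= nu k) -> forall j, F (mu, j) <= F (nu, j).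
  by move=> mu_le j; exact: balancing_delay_le mu_le (F_bal (mu, j)) (F_bal (nu, j)).
have F_bnd mu j : 0 <= F (mu, j) <= T.
  by have [? ? _ _] := F_bal (mu, j); apply/andP; split; rewrite // ltW.
have [s s_fix] := monotone_fixpoint F_mono F_bnd.
have dfwith_s j : dfwith s j (s j) = s by apply/funext => k; case: dfwithP.
exists (flow s), (fun j => T * demand s j), s; split; [|split] => // j.
- have := F_bal (s, j); rewrite /= s_fix => -[sj_ge0 sj_ltT]; rewrite dfwith_s => d_le d_eq.
  by apply/esym/(mu_fun_balance (c_gt0 j) T_gt0) => //; apply/andP.
- by rewrite mulrAC divff ?gt_eqF ?mul1r.
Qed.

End Network.

Theorem theorem1 (R : realType) (n m : nat) (c : 'I_n -> R) (T eps : R)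
    (r : 'I_m -> R) (kappa : 'I_m -> 'I_n -> R) :
  (0 < n)%N -> (0 < m)%N ->
  (forall j, 0 < c j) -> 0 < T -> 0 < eps ->
  (forall i, 0 < r i) -> (forall i j, 0 <= kappa i j) ->
  (forall (X : 'I_m -> 'I_n -> R) (q mu : 'I_n -> R),
      saddle_point c T eps r kappa X q mu <-> equilibrium c T eps r kappa X q mu)
  /\ (exists! Xqmu : ('I_m -> 'I_n -> R) * ('I_n -> R) * ('I_n -> R),
        equilibrium c T eps r kappa Xqmu.1.1 Xqmu.1.2 Xqmu.2).
Proof.
move=> n_gt0 _ c_gt0 T_gt0 eps_gt0 r_gt0 _.
split=> [X q mu|].
  by split; [apply: saddle_point_equilibrium | apply: equilibrium_saddle_point].
have [X [q [mu eqm]]] := exists_equilibrium kappa n_gt0 c_gt0 T_gt0 eps_gt0 r_gt0.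
exists (X, q, mu); split=> // -[[X' q'] mu'] /= eqm'.
exact: equilibrium_unique eqm eqm'.
Qed.
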